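(* Let $p_0,p_1,p_2$ be positive integers with $\gcd(p_0,p_1,p_2)=1$, and put $n=p_0+p_1+p_2$. Let $E=(\mathbb{Z}/n\mathbb{Z})\times\{0,1,2\}$ and define permutations $\sigma_0,\sigma_1$ of $E$ by $$\sigma_0(m,0)=(m,1),\quad \sigma_0(m,1)=(m,2),\quad \sigma_0(m,2)=(m,0),$$ $$\sigma_1(m,0)=(m-p_1,2),\quad \sigma_1(m,1)=(m-p_2,0),\quad \sigma_1(m,2)=(m-p_0,1),$$ with arithmetic in the first coordinate modulo $n$. Let $N=\langle\sigma_0\sigma_1,\sigma_1\sigma_0\rangle$ and $H=\langle\sigma_0\rangle$. Then $N\cap H=\{\mathrm{id}\}$.
   Context: These $\sigma_0,\sigma_1$ are the monodromy permutations of the dessin drawn on the rational billiards surface of the triangle with angles $(p_0\pi/n,p_1\pi/n,p_2\pi/n)$, acting on its $3n$ edges labeled $(m,i)$. Products are composition of functions. *)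

From mathcomp Require Import all_boot all_fingroup.
Set Implicit Arguments. Unset Strict Implicit. Unset Printing Implicit Defensive.

Definition dn (p0 p1 p2 : nat) := (p0 + p1 + p2)%N.
Definition E (p0 p1 p2 : nat) := ('I_(dn p0 p1 p2) * 'I_3)%type.

Lemma dn_pos_of {n} (m : 'I_n) : (0 < n)%N.
Proof. exact: leq_ltn_trans (leq0n m) (ltn_ord m). Qed.

(* the residue (m - p) mod n, for m : Z/nZ and p : nat *)
Definition subZ {n} (m : 'I_n) (p : nat) : 'I_n :=
  Ordinal (ltn_pmod (m + (n - p %% n)) (dn_pos_of m)).

Definition i0 : 'I_3 := @Ordinal 3 0 isT.
Definition i1 : 'I_3 := @Ordinal 3 1 isT.
Definition i2 : 'I_3 := @Ordinal 3 2 isT.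

Definition sigma0_fun p0 p1 p2 (e : E p0 p1 p2) : E p0 p1 p2 :=
  let: (m, i) := e in
  if val i == 0 then (m, i1) else if val i == 1 then (m, i2) else (m, i0).

Definition sigma1_fun p0 p1 p2 (e : E p0 p1 p2) : E p0 p1 p2 :=
  let: (m, i) := e in
  if val i == 0 then (subZ m p1, i2)
  else if val i == 1 then (subZ m p2, i0) else (subZ m p0, i1).

Lemma sigma0_inj p0 p1 p2 : injective (@sigma0_fun p0 p1 p2).
Proof.
move=> [m i] [m' i'] /=.
case: i => [[|[|[|k]]] Hi] //; case: i' => [[|[|[|k']]] Hi'] //= [->];
by congr pair; apply: val_inj.
Qed.

Lemma subZ_inj n p : injective (fun m : 'I_n => subZ m p).
Proof.
move=> m m' /(congr1 val) /= /eqP H; apply: val_inj => /=.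
have n0 := dn_pos_of m.
rewrite -(eqn_modDr (p %% n)) in H.
rewrite -!addnA !subnK ?(ltnW (ltn_pmod _ n0)) // !modnDr in H.
by move/eqP: H; rewrite !modn_small.
Qed.

Lemma sigma1_inj p0 p1 p2 : injective (@sigma1_fun p0 p1 p2).
Proof.
move=> [m i] [m' i'] /=.
case: i => [[|[|[|k]]] Hi] //; case: i' => [[|[|[|k']]] Hi'] //= H;
case: H => H; (have -> : m = m' by [apply: (@subZ_inj _ p0); exact: val_inj | apply: (@subZ_inj _ p1); exact: val_inj | apply: (@subZ_inj _ p2); exact: val_inj]); by congr pair; apply: val_inj.
Qed.

Definition sigma0 p0 p1 p2 : {perm E p0 p1 p2} := perm (@sigma0_inj p0 p1 p2).
Definition sigma1 p0 p1 p2 : {perm E p0 p1 p2} := perm (@sigma1_inj p0 p1 p2).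

(* The products sigma0 sigma1 and sigma1 sigma0 both preserve the second
   coordinate of every edge, so every element of N does.  On the other hand
   sigma0 ^ k adds k (mod 3) to the second coordinate, so it preserves it only
   when 3 divides k, and then sigma0 ^ k is the identity. *)

From mathcomp Require Import all_boot all_fingroup all_algebra.

Set Implicit Arguments.
Unset Strict Implicit.
Unset Printing Implicit Defensive.

Import GRing.Theory.

Section FiberPreserving.

Variables (T : finType) (rT : eqType) (f : T -> rT).

Definition fiber_preserving : {set {perm T}} :=
  [set g : {perm T} | [forall x, f (g x) == f x]].

Lemma fiber_preservingP (g : {perm T}) :
  reflect (forall x, f (g x) = f x) (g \in fiber_preserving).
Proof. by rewrite inE; apply: (iffP forallP) => fg x; apply/eqP. Qed.

Lemma group_set_fiber_preserving : group_set fiber_preserving.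
Proof.
apply/andP; split; first by apply/fiber_preservingP => x; rewrite perm1.
apply/subsetP => _ /mulsgP [g h /fiber_preservingP fg /fiber_preservingP fh ->].
by apply/fiber_preservingP => x; rewrite permM fh fg.
Qed.

Canonical fiber_preserving_group := Group group_set_fiber_preserving.

End FiberPreserving.

Section Dessin.

Variables p0 p1 p2 : nat.

Local Notation E := (E p0 p1 p2).
Local Notation s0 := (sigma0 p0 p1 p2).
Local Notation s1 := (sigma1 p0 p1 p2).
Local Notation level := (@snd 'I_(dn p0 p1 p2) 'I_3).

Lemma sigma0E (x : E) : s0 x = (x.1, x.2 + 1)%R.
Proof.
by case: x => m [[|[|[|k]]] lt_k3] //; rewrite permE; congr pair; apply: val_inj.
Qed.

Lemma expg_sigma0E k (x : E) : (s0 ^+ k)%g x = (x.1, x.2 + k%:R)%R.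
Proof.
elim: k => [|k IHk]; first by rewrite expg0 perm1 addr0; case: x.
by rewrite expgSr permM IHk sigma0E -addrA -mulrSr.
Qed.

Lemma sigma0_sigma1_preserving : (s0 * s1)%g \in fiber_preserving level.
Proof.
apply/fiber_preservingP => -[m [[|[|[|k]]] lt_k3]] //;
  by rewrite permM !permE; apply: val_inj.
Qed.

Lemma sigma1_sigma0_preserving : (s1 * s0)%g \in fiber_preserving level.
Proof.
apply/fiber_preservingP => -[m [[|[|[|k]]] lt_k3]] //;
  by rewrite permM !permE; apply: val_inj.
Qed.

Lemma fiber_preserving_cycle_sigma0 :
  (0 < dn p0 p1 p2)%N -> (fiber_preserving level :&: <[s0]>)%g = 1%g.
Proof.
move=> n_gt0; apply/trivgP/subsetP => g.
case/setIP => /fiber_preservingP fix_level /cycleP [k g_def].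
rewrite g_def in fix_level *; rewrite inE; apply/eqP/permP => x.
have k0 : (k%:R : 'I_3)%R = 0%R.
  have := fix_level (Ordinal n_gt0, 0%R).
  by rewrite expg_sigma0E /= add0r.
by rewrite expg_sigma0E k0 addr0 perm1; case: x.
Qed.

End Dessin.

Theorem lemma5 (p0 p1 p2 : nat) :
  (0 < p0)%N -> (0 < p1)%N -> (0 < p2)%N -> gcdn (gcdn p0 p1) p2 = 1%N ->
  (<< [set (sigma0 p0 p1 p2 * sigma1 p0 p1 p2)%g;
         (sigma1 p0 p1 p2 * sigma0 p0 p1 p2)%g] >>
     :&: <[sigma0 p0 p1 p2]>)%g = 1%g.
Proof.
move=> p0_gt0 _ _ _.
have n_gt0 : (0 < dn p0 p1 p2)%N by rewrite /dn -addnA ltn_addr.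
apply/trivgP; rewrite -(fiber_preserving_cycle_sigma0 n_gt0) setSI //.
rewrite gen_subG; apply/subsetP => g /set2P [] ->.
- exact: sigma0_sigma1_preserving.
- exact: sigma1_sigma0_preserving.
Qed.
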